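(* For a quantum sequence ensemble $\mathcal{E}=\bigotimes_{l=1}^{L}\mathcal{E}^{l}$ and $\vec{x}=(x_{1},\ldots,x_{L})$ with $x_l\in\{1,\ldots,n_l\}$, we have \[ \mathcal{C}_{\vec{x}}(\mathcal{E})=\prod_{l=1}^{L}\mathcal{C}_{x_{l}}(\mathcal{E}^{l}). \]
   Context: Let $\mathcal{E}^{l}=\{\eta_{i}^{l},\rho_{i}^{l}\}_{i\in\{1,\ldots,n_{l}\}}$, $l=1,\ldots,L$, be quantum state ensembles (density operators $\rho_i^l$ on finite-dimensional Hilbert spaces, prepared with nonzero probabilities $\eta_i^l$), with average states $\rho_0^l=\sum_i\eta_i^l\rho_i^l$. The quantum sequence ensemble is $\mathcal{E}=\bigotimes_{l=1}^{L}\mathcal{E}^{l}=\{\eta_{\vec{c}},\rho_{\vec{c}}\}_{\vec{c}}$ with $\eta_{\vec{c}}=\prod_l\eta_{c_l}^l$, $\rho_{\vec{c}}=\bigotimes_l\rho_{c_l}^l$, and average state $\rho_0=\bigotimes_l\rho_0^l$. For any ensemble $\{\eta_i,\rho_i\}_i$ with average state $\rho_0$, and measurements (POVMs) $\{M_?\}\cup\{M_i\}_i$ where outcome $M_i$ means guessing $\rho_i$ and $M_?$ is inconclusive, the maximum confidence to identify $\rho_x$ is $\mathcal{C}_x=\max \eta_x\mathrm{Tr}(\rho_xM_x)/\mathrm{Tr}(\rho_0M_x)$ over all measurements with $\mathrm{Tr}(\rho_0M_x)>0$, i.e. the maximal conditional probability that $\rho_x$ was prepared given outcome $M_x$. $\mathcal{C}_{x_l}(\mathcal{E}^l)$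 is this quantity for ensemble $\mathcal{E}^l$, and $\mathcal{C}_{\vec{x}}(\mathcal{E})$ for the sequence ensemble. *)

From HB Require Import structures.
From mathcomp Require Import all_boot all_order all_algebra.
From mathcomp Require Import complex.
From mathcomp Require Import classical_sets reals.

Set Implicit Arguments.
Unset Strict Implicit.
Unset Printing Implicit Defensive.

Import Order.TTheory GRing.Theory Num.Theory.
Local Open Scope ring_scope.
Local Open Scope classical_set_scope.

Section Quantum.
Variable R : realType.
Local Notation C := R[i].

Definition adjmx m n (A : 'M[C]_(m, n)) : 'M[C]_(n, m) := (map_mx (@Num.conj _) A)^T.

(* positive semidefinite operator on C^d: Hermitian with nonnegative
   quadratic form (the order on C = R[i] is the numClosedField order,
   so 0 <= z means z is real and nonnegative). *)
Definition psdmx d (A : 'M[C]_d) : Prop :=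
  A = adjmx A /\ forall v : 'cV[C]_d, 0 <= (adjmx v *m A *m v) 0 0.

Definition density d (rho : 'M[C]_d) : Prop := psdmx rho /\ \tr rho = 1.

Definition ensemble d (K : finType) (eta : K -> R) (rho : K -> 'M[C]_d) : Prop :=
  (forall i, 0 < eta i) /\ \sum_i eta i = 1 /\ (forall i, density (rho i)).

Definition avg_state d (K : finType) (eta : K -> R) (rho : K -> 'M[C]_d)
  : 'M[C]_d := \sum_i ((eta i)%:C)%C *: rho i.

(* A measurement (POVM) {M_?} u {M_i}_i : outcome None is the inconclusive
   outcome M_?, outcome Some i means guessing rho_i. *)
Definition povm d (K : finType) (M : option K -> 'M[C]_d) : Prop :=
  (forall o, psdmx (M o)) /\ \sum_o M o = 1%:M.

(* Tr(A B) as a real number (it is real for A, B positive semidefinite) *)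
Definition trR d (A B : 'M[C]_d) : R := complex.Re (\tr (A *m B)).

Definition confidences d (K : finType) (eta : K -> R) (rho : K -> 'M[C]_d)
    (x : K) : set R :=
  [set r | exists M : option K -> 'M[C]_d,
     povm M /\ 0 < trR (avg_state eta rho) (M (Some x)) /\
     r = eta x * trR (rho x) (M (Some x)) / trR (avg_state eta rho) (M (Some x))].

(* maximum confidence C_x (defined as the supremum; it is attained) *)
Definition max_conf d (K : finType) (eta : K -> R) (rho : K -> 'M[C]_d)
    (x : K) : R := sup (confidences eta rho x).

Definition tidx (L : nat) (d : 'I_L -> nat) : finType :=
  {dffun forall l : 'I_L, 'I_(d l)}.

(* tensor product of L operators, acting on C^(#|tidx d|) whose basis
   vectors are enumerated by enum_val (product basis) *)
Definition tensmxL (L : nat) (d : 'I_L -> nat) (A : forall l, 'M[C]_(d l))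
  : 'M[C]_#|tidx d| :=
  \matrix_(i, j) \prod_(l < L) A l ((enum_val i : tidx d) l) ((enum_val j : tidx d) l).

Definition seq_index (L : nat) (n : 'I_L -> nat) : finType :=
  {dffun forall l : 'I_L, 'I_(n l)}.

Definition seq_eta (L : nat) (n : 'I_L -> nat) (eta : forall l, 'I_(n l) -> R)
  (c : seq_index n) : R := \prod_(l < L) eta l (c l).

Definition seq_rho (L : nat) (n d : 'I_L -> nat)
  (rho : forall l, 'I_(n l) -> 'M[C]_(d l)) (c : seq_index n)
  : 'M[C]_#|tidx d| := tensmxL (fun l => rho l (c l)).

End Quantum.

(* Write A = eta_x rho_x and rho_0 for the average state.  The confidence of
   an effect 0 <= E <= 1 is Tr(A E) / Tr(rho_0 E), so every c with A <= c rho_0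
   (Loewner order) bounds all confidences; conversely, testing the rank-one
   projectors shows A <= C_x rho_0.  For the sequence ensemble both A and rho_0
   are tensor products, and tensor products of positive operators preserve the
   Loewner order, so A <= (prod_l C_{x_l}) rho_0, giving C_x <= prod_l C_{x_l}.
   Conversely the tensor product of effects E_l is an effect whose confidence is
   the product of the confidences of the E_l, giving C_x >= prod_l C_{x_l}. *)

From HB Require Import structures.
From mathcomp Require Import all_boot all_order all_algebra.
From mathcomp Require Import complex.
From mathcomp Require Import classical_sets reals.
From mathcomp Require Import spectral boolp.

Import Order.TTheory GRing.Theory Num.Theory.
Set Implicit Arguments.
Unset Strict Implicit.
Local Open Scope ring_scope.
Local Open Scope sesquilinear_scope.

Section PositiveSemidefinite.
Variable R : realType.
Local Notation C := R[i].

Lemma adjmxE m n (A : 'M[C]_(m, n)) i j : adjmx A i j = (A j i)^*.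
Proof. by rewrite /adjmx !mxE. Qed.

Lemma adjmx_trmxC m n (A : 'M[C]_(m, n)) : adjmx A = A ^t*.
Proof. by apply/matrixP => i j; rewrite !mxE. Qed.

Lemma adjmxK m n (A : 'M[C]_(m, n)) : adjmx (adjmx A) = A.
Proof. by apply/matrixP => i j; rewrite !adjmxE conjCK. Qed.

Lemma adjmxM m n p (A : 'M[C]_(m, n)) (B : 'M[C]_(n, p)) :
  adjmx (A *m B) = adjmx B *m adjmx A.
Proof.
apply/matrixP => i j; rewrite adjmxE !mxE rmorph_sum; apply: eq_bigr => k _.
by rewrite !adjmxE rmorphM mulrC.
Qed.

Lemma adjmxD m n (A B : 'M[C]_(m, n)) : adjmx (A + B) = adjmx A + adjmx B.
Proof. by apply/matrixP => i j; rewrite !(adjmxE, mxE) rmorphD. Qed.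

Lemma adjmxB m n (A B : 'M[C]_(m, n)) : adjmx (A - B) = adjmx A - adjmx B.
Proof. by apply/matrixP => i j; rewrite !(adjmxE, mxE) rmorphB. Qed.

Lemma adjmxZ m n a (A : 'M[C]_(m, n)) : adjmx (a *: A) = a^* *: adjmx A.
Proof. by apply/matrixP => i j; rewrite !(adjmxE, mxE) rmorphM. Qed.

Lemma adjmx1 n : adjmx (1%:M : 'M[C]_n) = 1%:M.
Proof.
apply/matrixP => i j; rewrite !(adjmxE, mxE) eq_sym.
by case: eqP; rewrite /= ?conjC1 ?conjC0.
Qed.

Definition qform d (v : 'cV[C]_d) (A : 'M[C]_d) : C := (adjmx v *m A *m v) 0 0.

Lemma qformB d (v : 'cV[C]_d) A B : qform v (A - B) = qform v A - qform v B.
Proof. by rewrite /qform mulmxBr mulmxBl mxE [X in _ + X]mxE. Qed.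

Lemma qformZ d (v : 'cV[C]_d) a A : qform v (a *: A) = a * qform v A.
Proof. by rewrite /qform -scalemxAr -scalemxAl mxE. Qed.

Lemma qform1_ge0 d (v : 'cV[C]_d) : 0 <= qform v 1%:M.
Proof.
rewrite /qform mulmx1 mxE; apply: sumr_ge0 => k _.
by rewrite adjmxE mulrC mul_conjC_ge0.
Qed.

Lemma qform1_eq0 d (v : 'cV[C]_d) : (qform v 1%:M == 0) = (v == 0).
Proof.
apply/idP/eqP => [|->]; last by rewrite /qform mulmx0 mxE.
rewrite /qform mulmx1 mxE psumr_eq0 => [/allP v0|k _]; last first.
  by rewrite adjmxE mulrC mul_conjC_ge0.
apply/matrixP => k j; rewrite ord1 mxE.
by have /(_ (mem_index_enum k)) := v0 k; rewrite adjmxE mulf_eq0 conjC_eq0 orbb => /eqP.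
Qed.

Lemma psdmx_gram m d (Q : 'M[C]_(m, d)) : psdmx (adjmx Q *m Q).
Proof.
split; first by rewrite adjmxM adjmxK.
move=> v; rewrite mulmxA -adjmxM -mulmxA mxE; apply: sumr_ge0 => k _.
by rewrite adjmxE mulrC mul_conjC_ge0.
Qed.

Lemma psdmx0 d : psdmx (0 : 'M[C]_d).
Proof. by have := psdmx_gram (0 : 'M[C]_d); rewrite mulmx0. Qed.

Lemma psdmx1 d : psdmx (1%:M : 'M[C]_d).
Proof. by have := psdmx_gram (1%:M : 'M[C]_d); rewrite adjmx1 mulmx1. Qed.

Lemma psdmxD d (A B : 'M[C]_d) : psdmx A -> psdmx B -> psdmx (A + B).
Proof.
move=> [hA qA] [hB qB]; split; first by rewrite adjmxD -hA -hB.
by move=> v; rewrite /qform mulmxDr mulmxDl mxE addr_ge0.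
Qed.

Lemma psdmx_sum d (I : finType) (P : pred I) (F : I -> 'M[C]_d) :
  (forall i, P i -> psdmx (F i)) -> psdmx (\sum_(i | P i) F i).
Proof. by move=> psdF; apply: big_ind => //; [exact: psdmx0 | exact: psdmxD]. Qed.

Lemma psdmxZ d a (A : 'M[C]_d) : 0 <= a -> psdmx A -> psdmx (a *: A).
Proof.
move=> a_ge0 [hA qA]; split; first by rewrite adjmxZ -hA geC0_conj.
by move=> v; rewrite -[_ 0 0]/(qform v _) qformZ mulr_ge0 //; apply: qA.
Qed.

Lemma qform_row m d (M : 'M[C]_(m, d)) (X : 'M[C]_d) i :
  (M *m X *m adjmx M) i i = qform (adjmx (row i M)) X.
Proof.
rewrite /qform adjmxK !mxE; apply: eq_bigr => k _; rewrite !mxE.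
by congr (_ * _); apply: eq_bigr => l _; rewrite !mxE.
Qed.

Lemma psdmx_factor d (A : 'M[C]_d) : psdmx A -> exists Q : 'M[C]_d, A = adjmx Q *m Q.
Proof.
move=> [hA qA].
have nA : A \is normalmx by apply/eqP; rewrite -adjmx_trmxC -hA.
have eA := orthomx_spectralP nA.
set U := spectralmx A in eA; set D := spectral_diag A in eA.
have UU : U *m adjmx U = 1%:M.
  by rewrite adjmx_trmxC; apply/unitarymxP/spectral_unitarymx.
rewrite invmx_unitary ?spectral_unitarymx // -adjmx_trmxC in eA.
have DA : diag_mx D = U *m A *m adjmx U.
  by rewrite eA !mulmxA UU mul1mx -!mulmxA UU mulmx1.
have D_ge0 j : 0 <= D 0 j.
  have := qA (adjmx (row j U)); rewrite -[X in 0 <= X]/(qform _ A) -qform_row -DA.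
  by rewrite mxE eqxx mulr1n.
exists (diag_mx (\row_j sqrtC (D 0 j)) *m U).
rewrite adjmxM !mulmxA -[adjmx U *m _ *m _]mulmxA.
suff -> : adjmx (diag_mx (\row_j sqrtC (D 0 j))) *m diag_mx (\row_j sqrtC (D 0 j)) = diag_mx D.
  exact: eA.
apply/matrixP => i j; rewrite mul_mx_diag !mxE eq_sym.
case: eqP => [->|]; rewrite ?mulr1n ?mulr0n ?conjC0 ?mul0r //.
by rewrite geC0_conj ?sqrtC_ge0 // -expr2 sqrtCK.
Qed.

Lemma mxtrace_psdM_ge0 d (X E : 'M[C]_d) : psdmx X -> psdmx E -> 0 <= \tr (X *m E).
Proof.
move=> [_ qX] /psdmx_factor [Q ->].
rewrite mulmxA mxtrace_mulC mulmxA /mxtrace; apply: sumr_ge0 => i _.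
by rewrite qform_row; apply: qX.
Qed.

Definition effect d (E : 'M[C]_d) : Prop := psdmx E /\ psdmx (1%:M - E).

Lemma effect1 d : effect (1%:M : 'M[C]_d).
Proof. by split; rewrite ?subrr; [exact: psdmx1 | exact: psdmx0]. Qed.

Definition rank1_proj d (v : 'cV[C]_d) : 'M[C]_d :=
  (qform v 1%:M)^-1 *: (v *m adjmx v).

Section Rank1Proj.
Variables (d : nat) (v : 'cV[C]_d).
Hypothesis v_neq0 : v != 0.
Local Notation P := (rank1_proj v).

Lemma adjmx_rank1_proj : adjmx P = P.
Proof. by rewrite adjmxZ adjmxM adjmxK geC0_conj ?invr_ge0 ?qform1_ge0. Qed.

Lemma rank1_proj_idem : P *m P = P.
Proof.
have vv : adjmx v *m v = (qform v 1%:M)%:M.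
  by apply/matrixP => i j; rewrite !ord1 [RHS]mxE eqxx mulr1n /qform mulmx1.
rewrite /rank1_proj -scalemxAl -scalemxAr scalerA mulmxA -[v *m _ *m v]mulmxA vv.
by rewrite mul_mx_scalar -scalemxAl scalerA -mulrA mulVf ?mulr1 ?qform1_eq0.
Qed.

Lemma effect_rank1_proj : effect P.
Proof.
split; first by have := psdmx_gram P; rewrite adjmx_rank1_proj rank1_proj_idem.
have := psdmx_gram (1%:M - P).
rewrite adjmxB adjmx1 adjmx_rank1_proj mulmxBl mul1mx mulmxBr mulmx1.
by rewrite rank1_proj_idem subrr subr0.
Qed.

Lemma mxtrace_mul_rank1_proj (X : 'M[C]_d) : \tr (X *m P) = qform v X / qform v 1%:M.
Proof.
rewrite /rank1_proj -scalemxAr mxtraceZ mulmxA mxtrace_mulC mulmxA.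
by rewrite /mxtrace big_ord1 mulrC.
Qed.

End Rank1Proj.

End PositiveSemidefinite.

Section Confidence.
Variable R : realType.
Local Notation C := R[i].

Lemma trRE d (X E : 'M[C]_d) : psdmx X -> psdmx E -> (trR X E)%:C%C = \tr (X *m E).
Proof. by move=> psdX psdE; apply/RRe_real/ger0_real/mxtrace_psdM_ge0. Qed.

Lemma trR_ge0 d (X E : 'M[C]_d) : psdmx X -> psdmx E -> 0 <= trR X E.
Proof. by move=> psdX psdE; rewrite -ler0c trRE // mxtrace_psdM_ge0. Qed.

Lemma trRZ d (a : R) (X E : 'M[C]_d) : trR (a%:C%C *: X) E = a * trR X E.
Proof.
rewrite /trR -scalemxAl mxtraceZ.
by case: (\tr (X *m E)) => re im; rewrite /= mul0r subr0.
Qed.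

Lemma trRB d (X Y E : 'M[C]_d) : trR (X - Y) E = trR X E - trR Y E.
Proof.
rewrite /trR mulmxBl raddfB /=.
by move: (\tr (X *m E)) (\tr (Y *m E)) => [? ?] [? ?].
Qed.

Variables (d : nat) (K : finType) (eta : K -> R) (rho : K -> 'M[C]_d) (x : K).
Local Notation rho0 := (avg_state eta rho).

Definition confidence (E : 'M[C]_d) : R := eta x * trR (rho x) E / trR rho0 E.

Lemma confidencesP r : confidences eta rho x r <->
  exists E, [/\ effect E, 0 < trR rho0 E & r = confidence E].
Proof.
split=> [[M [[psdM sumM] [trM ->]]] | [E [[psdE psd1E] trE ->]]].
  exists (M (Some x)); split=> //; split=> //.
  rewrite -sumM (bigD1 (Some x)) //= addrC addrK.
  by apply: psdmx_sum => o _; apply: psdM.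
exists (fun o => if o == Some x then E else if o == None then 1%:M - E else 0).
rewrite eqxx; split=> //; split.
  by move=> o; do 2?case: eqP => _ //; exact: psdmx0.
rewrite (bigD1 (Some x)) // (bigD1 None) //= eqxx big1 ?addr0 => [|o].
  by rewrite addrC subrK.
by case/andP => /negbTE -> /negbTE ->.
Qed.

Lemma confidences_ub c : psdmx (c%:C%C *: rho0 - (eta x)%:C%C *: rho x) ->
  ubound (confidences eta rho x) c.
Proof.
move=> psd_c r /confidencesP [E [[psdE _] trE ->]].
by rewrite ler_pdivrMr // -subr_ge0 -!trRZ -trRB trR_ge0.
Qed.

Hypothesis ens : ensemble eta rho.

Lemma ensemble_eta_gt0 i : 0 < eta i.
Proof. by case: ens. Qed.

Lemma ensemble_psdmx i : psdmx (rho i).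
Proof. by case: ens => _ [_ /(_ i) []]. Qed.

Lemma psdmx_weighted i : psdmx ((eta i)%:C%C *: rho i).
Proof. by apply: psdmxZ; [rewrite ler0c ltW ?ensemble_eta_gt0 | exact: ensemble_psdmx]. Qed.

Lemma psdmx_avg_state : psdmx rho0.
Proof. by apply: psdmx_sum => i _; apply: psdmx_weighted. Qed.

Lemma psdmx_avg_state_sub i : psdmx (rho0 - (eta i)%:C%C *: rho i).
Proof.
rewrite /avg_state (bigD1 i) //= addrC addrK.
by apply: psdmx_sum => j _; apply: psdmx_weighted.
Qed.

Lemma mxtrace_avg_state : \tr rho0 = 1.
Proof.
case: ens => _ [sum_eta dens]; rewrite raddf_sum /=.
under eq_bigr => i _ do rewrite mxtraceZ (proj2 (dens i)) mulr1.
by rewrite -rmorph_sum sum_eta.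
Qed.

Lemma confidences_eta : confidences eta rho x (eta x).
Proof.
apply/confidencesP; exists 1%:M.
have tr1 X : trR X 1%:M = complex.Re (\tr X) by rewrite /trR mulmx1.
have [_ [_ /(_ x) [_ tr_rho]]] := ens.
rewrite /confidence !tr1 mxtrace_avg_state tr_rho.
by split; [exact: effect1 | exact: ltr01 | rewrite divr1 mulr1].
Qed.

Lemma confidences_ge0 r : confidences eta rho x r -> 0 <= r.
Proof.
move=> /confidencesP [E [[psdE _] trE ->]].
apply: divr_ge0 (ltW trE); apply: mulr_ge0 (trR_ge0 (ensemble_psdmx _) psdE).
exact/ltW/ensemble_eta_gt0.
Qed.

Lemma has_sup_confidences : has_sup (confidences eta rho x).
Proof.
split; first by exists (eta x); exact: confidences_eta.
by exists 1; apply: confidences_ub; rewrite rmorph1 scale1r; exact: psdmx_avg_state_sub.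
Qed.

Lemma qform_le_max_conf v : qform v ((eta x)%:C%C *: rho x) <=
  (max_conf eta rho x)%:C%C * qform v rho0.
Proof.
set a := qform v _; set b := qform v rho0.
have a_ge0 : 0 <= a by case: (psdmx_weighted x) => _; apply.
have a_le_b : a <= b.
  by rewrite -subr_ge0 -qformB; case: (psdmx_avg_state_sub x) => _; apply.
have [b0 | b_neq0] := eqVneq b 0; first by rewrite b0 mulr0 -b0.
have b_gt0 : 0 < b by rewrite lt_def b_neq0 (le_trans a_ge0).
have v_neq0 : v != 0.
  by move: b_neq0; apply: contra_neq => v0; rewrite /b v0 /qform mulmx0 mxE.
(* The projector onto [v] is an effect of confidence [a / b]. *)
set s := qform v 1%:M; have s_gt0 : 0 < s by rewrite lt_def qform1_eq0 v_neq0 qform1_ge0.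
set P := rank1_proj v; have [psdP _] := effect_rank1_proj v_neq0.
have trP X : psdmx X -> (trR X P)%:C%C = qform v X / s.
  by move=> psdX; rewrite trRE // mxtrace_mul_rank1_proj.
have trP0 : (trR rho0 P)%:C%C = b / s := trP _ psdmx_avg_state.
have trPx : (trR (rho x) P)%:C%C = qform v (rho x) / s := trP _ (ensemble_psdmx x).
have trP0_gt0 : 0 < trR rho0 P by rewrite -ltcR rmorph0 trP0 divr_gt0.
have : confidence P <= max_conf eta rho x.
  apply: sup_upper_bound; first exact: has_sup_confidences.
  by apply/confidencesP; exists P; split; first exact: effect_rank1_proj.
rewrite -lecR /confidence !rmorphM rmorphV ?unitfE ?gt_eqF //= trP0 trPx.
by rewrite mulrA -qformZ invf_div mulrA divfK ?gt_eqF // ler_pdivrMr.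
Qed.

Lemma psdmx_max_conf_sub :
  psdmx ((max_conf eta rho x)%:C%C *: rho0 - (eta x)%:C%C *: rho x).
Proof.
have [herm0 _] := psdmx_avg_state; have [hermx _] := ensemble_psdmx x.
split; first by rewrite adjmxB !adjmxZ !conj_Creal ?complex_real // -herm0 -hermx.
by move=> v; rewrite -[_ 0 0]/(qform v _) qformB qformZ subr_ge0 qform_le_max_conf.
Qed.

End Confidence.

Lemma prodr_sum_dffun (Rg : comNzRingType) (I : finType) (T_ : I -> finType)
    (F : forall i, T_ i -> Rg) :
  \prod_i \sum_(k : T_ i) F i k = \sum_(c : {dffun forall i, T_ i}) \prod_i F i (c i).
Proof.
have sum_tagged i : \sum_(k : T_ i) F i k =
    \sum_(p : {i : I & T_ i} | tagged_with T_ i p) F (tag p) (tagged p).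
  have := @sig_big_dep Rg 0 +%R I T_ (pred1 i) (fun _ _ => true) F.
  rewrite big_pred1_eq => ->; apply: eq_bigl => p; by rewrite andbT.
under eq_bigr do rewrite sum_tagged.
rewrite bigA_distr_big_dep big_sub.
pose h (c : {dffun forall i, T_ i}) := to_family_tagged_with (fprod_of_dffun c).
have h_bij : bijective h.
  by apply: bij_comp; [exact: to_family_tagged_with_bij | exact: fprod_of_dffun_bij].
rewrite (reindex h) /=; last exact: onW_bij.
by apply: eq_bigr => c _; apply: eq_bigr => i _; rewrite /h /= ffunE.
Qed.

Section TensorProduct.
Variables (R : realType) (L : nat) (d : 'I_L -> nat).
Local Notation C := R[i].
Local Notation T := (tidx d).
Local Notation tens := (@tensmxL R L d).

Lemma sum_enum_val (F : T -> C) : \sum_(i < #|T|) F (enum_val i) = \sum_(t : T) F t.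
Proof. by rewrite (big_enum_val (A := T)). Qed.

Lemma eq_tensmxL (A B : forall l, 'M[C]_(d l)) : (forall l, A l = B l) -> tens A = tens B.
Proof.
by move=> eqAB; apply/matrixP => i j; rewrite !mxE; apply: eq_bigr => l _; rewrite eqAB.
Qed.

Lemma tensmxL_mul (X Y : forall l, 'M[C]_(d l)) :
  tens (fun l => X l *m Y l) = tens X *m tens Y.
Proof.
apply/matrixP => i k; rewrite !mxE.
under eq_bigr do rewrite mxE.
rewrite (prodr_sum_dffun (fun l m => X l (enum_val i l) m * Y l m (enum_val k l))).
rewrite -(sum_enum_val
  (fun t => \prod_l (X l (enum_val i l) (t l) * Y l (t l) (enum_val k l)))).
by apply: eq_bigr => j _; rewrite !mxE big_split.
Qed.

Lemma tensmxL_adj (X : forall l, 'M[C]_(d l)) :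
  tens (fun l => adjmx (X l)) = adjmx (tens X).
Proof.
apply/matrixP => i j; rewrite adjmxE !mxE rmorph_prod.
by apply: eq_bigr => l _; rewrite adjmxE.
Qed.

Lemma tensmxL1 : tens (fun l => 1%:M) = 1%:M.
Proof.
apply/matrixP => i j; rewrite !mxE.
have [->|neq_ij] := eqVneq i j; first by apply: big1 => l _; rewrite mxE eqxx.
have [l neq_l] : exists l, enum_val i l != enum_val j l.
  apply/existsP; apply: contraT; rewrite negb_exists => /forallP eq_ij.
  suff /enum_val_inj eq_ij' : enum_val i = enum_val j by rewrite eq_ij' eqxx in neq_ij.
  by apply/ffunP => l; apply/eqP; rewrite -[_ == _]negbK eq_ij.
by rewrite (bigD1 l) //= mxE (negbTE neq_l) mul0r.
Qed.

Lemma tensmxLZ (a : 'I_L -> C) (X : forall l, 'M[C]_(d l)) :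
  tens (fun l => a l *: X l) = (\prod_l a l) *: tens X.
Proof.
by apply/matrixP => i j; rewrite !mxE -big_split; apply: eq_bigr => l _; rewrite mxE.
Qed.

Lemma tensmxL_sum (K : 'I_L -> finType) (F : forall l, K l -> 'M[C]_(d l)) :
  tens (fun l => \sum_k F l k) = \sum_(c : {dffun forall l, K l}) tens (fun l => F l (c l)).
Proof.
apply/matrixP => i j; rewrite !mxE summxE.
under eq_bigr do rewrite summxE.
rewrite (prodr_sum_dffun (fun l k => F l k (enum_val i l) (enum_val j l))).
by apply: eq_bigr => c _; rewrite mxE.
Qed.

Lemma mxtrace_tensmxL (X : forall l, 'M[C]_(d l)) : \tr (tens X) = \prod_l \tr (X l).
Proof.
rewrite /mxtrace (prodr_sum_dffun (fun l k => X l k k)) -sum_enum_val.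
by apply: eq_bigr => i _; rewrite mxE.
Qed.

Lemma psdmx_tensmxL (P : forall l, 'M[C]_(d l)) :
  (forall l, psdmx (P l)) -> psdmx (tens P).
Proof.
move=> psdP; have [Q eqPQ] := all_sig (fun l => cid (psdmx_factor (psdP l))).
by rewrite (eq_tensmxL eqPQ) tensmxL_mul tensmxL_adj; exact: psdmx_gram.
Qed.

(* Expand [tens Y] with [Y l = X l + (Y l - X l)]: all terms but [tens X] are psd. *)
Lemma psdmx_tensmxLB (X Y : forall l, 'M[C]_(d l)) :
  (forall l, psdmx (X l)) -> (forall l, psdmx (Y l - X l)) ->
  psdmx (tens Y - tens X).
Proof.
move=> psdX psdYX.
pose F l (b : bool) := if b then Y l - X l else X l.
have sumF l : \sum_b F l b = Y l by rewrite big_bool /F /= subrK.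
rewrite -(eq_tensmxL sumF) tensmxL_sum (bigD1 [ffun=> false]) //=.
rewrite (eq_tensmxL (B := X)) => [|l]; last by rewrite ffunE.
rewrite addrAC subrr add0r; apply: psdmx_sum => c _; apply: psdmx_tensmxL => l.
by rewrite /F; case: (c l).
Qed.

Lemma trR_tensmxL (X E : forall l, 'M[C]_(d l)) :
  (forall l, psdmx (X l)) -> (forall l, psdmx (E l)) ->
  trR (tens X) (tens E) = \prod_l trR (X l) (E l).
Proof.
move=> psdX psdE; apply: complexI.
rewrite rmorph_prod trRE; [|exact: psdmx_tensmxL..].
rewrite -(tensmxL_mul X E) mxtrace_tensmxL.
by apply: eq_bigr => l _; apply/esym/trRE.
Qed.

Lemma effect_tensmxL (E : forall l, 'M[C]_(d l)) :
  (forall l, effect (E l)) -> effect (tens E).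
Proof.
move=> effE; split; first by apply: psdmx_tensmxL => l; case: (effE l).
by rewrite -tensmxL1; apply: psdmx_tensmxLB => l; case: (effE l).
Qed.

End TensorProduct.

Section SupProduct.
Variable R : realType.

Lemma ler_mul_sup (S : set R) (a b : R) : has_sup S -> 0 <= a ->
  (forall r, S r -> a * r <= b) -> a * sup S <= b.
Proof.
move=> [[r0 Sr0] _] a_ge0 le_b.
have [a0 | a_neq0] := eqVneq a 0; first by have := le_b _ Sr0; rewrite a0 !mul0r.
have a_gt0 : 0 < a by rewrite lt_def a_neq0.
rewrite mulrC -ler_pdivlMr //; apply: ge_sup; first by exists r0.
by move=> r Sr; rewrite ler_pdivlMr // mulrC le_b.
Qed.

(* Replace the factors by suprema one at a time, keeping the others fixed;
   [uniq s] makes the factors independent. *)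
Lemma prod_sup_le (I : eqType) (S : I -> set R) (s : seq I) (b : R) :
  uniq s -> (forall i, has_sup (S i)) -> (forall i r, S i r -> 0 <= r) ->
  (forall r : I -> R, (forall i, S i (r i)) -> \prod_(i <- s) r i <= b) ->
  \prod_(i <- s) sup (S i) <= b.
Proof.
move=> + supS S_ge0.
suff gen a : 0 <= a -> uniq s ->
    (forall r, (forall i, S i (r i)) -> a * \prod_(i <- s) r i <= b) ->
    a * \prod_(i <- s) sup (S i) <= b.
  by move=> s_uniq le_b; rewrite -[leLHS]mul1r gen // => r /le_b; rewrite mul1r.
have sup_ge0 i : 0 <= sup (S i).
  have [[r Sr] _] := supS i.
  exact: le_trans (S_ge0 _ _ Sr) (sup_upper_bound (supS i) Sr).
elim: s a => [|i s IH] a a_ge0.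
  have [r0 Sr0] := choice (fun i => proj1 (supS i)).
  by move=> _ /(_ r0 Sr0); rewrite !big_nil.
move=> /andP [i_notin_s s_uniq] le_b; rewrite big_cons mulrA.
apply: IH => [||r Sr]; rewrite ?mulr_ge0 //.
rewrite mulrAC; apply: ler_mul_sup => [||q Sq]; rewrite ?mulr_ge0 ?prodr_ge0 //.
  by move=> j _; apply: S_ge0 (Sr j).
pose r' j := if j == i then q else r j.
have r'_r : \prod_(j <- s) r' j = \prod_(j <- s) r j.
  by apply: eq_big_seq => j j_s; rewrite /r'; case: eqP j_s i_notin_s => [-> ->|].
have /le_b : forall j, S j (r' j) by move=> j; rewrite /r'; case: eqP => [->|].
by rewrite big_cons {1}/r' eqxx r'_r mulrA mulrAC.
Qed.

End SupProduct.

Section SequenceEnsemble.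
Variables (R : realType) (L : nat) (n d : 'I_L -> nat).
Variables (eta : forall l, 'I_(n l) -> R) (rho : forall l, 'I_(n l) -> 'M[R[i]]_(d l)).
Arguments eta : clear implicits.
Arguments rho : clear implicits.

Lemma avg_state_seq :
  avg_state (seq_eta eta) (seq_rho rho) = tensmxL (fun l => avg_state (eta l) (rho l)).
Proof.
rewrite /avg_state tensmxL_sum; apply: eq_bigr => c _.
by rewrite tensmxLZ /seq_eta rmorph_prod.
Qed.

Hypothesis ens : forall l, ensemble (eta l) (rho l).

Lemma seq_ensemble : ensemble (seq_eta eta) (seq_rho rho).
Proof.
split; first by move=> c; apply: prodr_gt0 => l _; apply: ensemble_eta_gt0.
split.
  rewrite /seq_eta -(prodr_sum_dffun eta); apply: big1 => l _.
  by case: (ens l) => _ [].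
move=> c; split; first by apply: psdmx_tensmxL => l; apply: ensemble_psdmx.
rewrite mxtrace_tensmxL; apply: big1 => l _.
by case: (ens l) => _ [_ /(_ (c l)) []].
Qed.

Lemma confidence_tensmxL (x : seq_index n) (E : forall l, 'M[R[i]]_(d l)) :
  (forall l, effect (E l)) ->
  confidence (seq_eta eta) (seq_rho rho) x (tensmxL E)
    = \prod_l confidence (eta l) (rho l) (x l) (E l).
Proof.
move=> effE; have psdE l : psdmx (E l) by case: (effE l).
have psd0 l : psdmx (avg_state (eta l) (rho l)) := psdmx_avg_state (ens l).
have psdx l : psdmx (rho l (x l)) := ensemble_psdmx (ens l) (x l).
rewrite /confidence avg_state_seq !trR_tensmxL //.
by rewrite /seq_eta -prodfV -!big_split.
Qed.

Lemma confidences_seq (x : seq_index n) (r : 'I_L -> R) :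
  (forall l, confidences (eta l) (rho l) (x l) (r l)) ->
  confidences (seq_eta eta) (seq_rho rho) x (\prod_l r l).
Proof.
move=> conf_r.
have [E optE] := all_sig (fun l => cid (proj1 (confidencesP _ _ _ _) (conf_r l))).
have effE l : effect (E l) by case: (optE l).
apply/confidencesP; exists (tensmxL E); split; first exact: effect_tensmxL.
  rewrite avg_state_seq trR_tensmxL => [||l]; last by case: (effE l).
  - by apply: prodr_gt0 => l _; case: (optE l).
  - by move=> l; apply: psdmx_avg_state (ens l).
by rewrite confidence_tensmxL //; apply: eq_bigr => l _; case: (optE l).
Qed.

Lemma psdmx_prod_max_conf_sub (x : seq_index n) :
  psdmx ((\prod_l max_conf (eta l) (rho l) (x l))%:C%C
           *: avg_state (seq_eta eta) (seq_rho rho)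
         - (seq_eta eta x)%:C%C *: seq_rho rho x).
Proof.
rewrite avg_state_seq /seq_rho /seq_eta !rmorph_prod -!tensmxLZ.
apply: psdmx_tensmxLB => l; first exact: psdmx_weighted.
exact: psdmx_max_conf_sub.
Qed.

End SequenceEnsemble.

Theorem theorem4 (R : realType) (L : nat) (n d : 'I_L -> nat)
    (eta : forall l : 'I_L, 'I_(n l) -> R)
    (rho : forall l : 'I_L, 'I_(n l) -> 'M[R[i]]_(d l))
    (x : seq_index n) :
  (forall l : 'I_L, ensemble (eta l) (rho l)) ->
  max_conf (seq_eta eta) (seq_rho rho) x
    = \prod_(l < L) max_conf (eta l) (rho l) (x l).
Proof.
move=> ens; have ens_seq := seq_ensemble ens.
apply/le_anti/andP; split.
  apply: ge_sup; first by exists (seq_eta eta x); apply: confidences_eta.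
  exact/confidences_ub/psdmx_prod_max_conf_sub.
apply: prod_sup_le (index_enum_uniq _) _ _ _ => [l | l r | r conf_r].
- exact: has_sup_confidences.
- exact: confidences_ge0.
- exact/(sup_upper_bound (has_sup_confidences _ ens_seq))/confidences_seq.
Qed.
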